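(* For any $\varepsilon>0$ and any $v,w\in\mathbb{R}^L$, if $\|v-w\|<\varepsilon$ then $\mathrm{argmax}^\varepsilon(v)\cap\mathrm{argmax}^\varepsilon(w)\neq\varnothing$. In particular, $\mathrm{argmax}^\varepsilon$ restricted to $\Delta_{L-1}$ is an $\varepsilon$-compatible selection rule.
   Context: $\|\cdot\|$ is the Euclidean norm on $\mathbb{R}^L$, $\Delta_{L-1}=\{w\in\mathbb{R}^L:w_i\ge0,\sum_iw_i=1\}$. For $\varepsilon>0$ and $j\in[L]$, $R_j^\varepsilon=\{w\in\mathbb{R}^L: w_j\ge\max_{\ell\neq j}w_\ell+\varepsilon/\sqrt2\}$, and the inflated argmax is $\mathrm{argmax}^\varepsilon(w)=\{j\in[L]:\mathrm{dist}(w,R_j^\varepsilon)<\varepsilon\}$ where $\mathrm{dist}(w,R)=\inf_{u\in R}\|w-u\|$. A selection rule $s:\Delta_{L-1}\to2^{[L]}$ is $\varepsilon$-compatible if $\|v-w\|<\varepsilon$ implies $s(v)\cap s(w)\ne\varnothing$ for all $v,w\in\Delta_{L-1}$. *)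

From HB Require Import structures.
From mathcomp Require Import all_boot all_order all_algebra.
From mathcomp Require Import boolp classical_sets reals.
Set Implicit Arguments. Unset Strict Implicit. Unset Printing Implicit Defensive.
Import Order.TTheory GRing.Theory Num.Theory.
Local Open Scope ring_scope.
Local Open Scope classical_set_scope.

Section Defs.
Variables (R : realType) (L : nat).

Definition enorm (x : 'I_L -> R) : R := Num.sqrt (\sum_(i < L) x i ^+ 2).

(* R_j^eps = { w | w_j >= max_{l <> j} w_l + eps/sqrt 2 } (max written out) *)
Definition Rreg (eps : R) (j : 'I_L) : set ('I_L -> R) :=
  [set u | forall l : 'I_L, l != j -> u l + eps / Num.sqrt 2 <= u j].

Definition dist (w : 'I_L -> R) (A : set ('I_L -> R)) : R :=
  inf [set enorm (fun i => w i - u i) | u in A].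

Definition argmax_eps (eps : R) (w : 'I_L -> R) : set 'I_L :=
  [set j | dist w (Rreg eps j) < eps].

Definition simplex : set ('I_L -> R) :=
  [set w | (forall i, 0 <= w i) /\ \sum_(i < L) w i = 1].

Definition eps_compatible (s : ('I_L -> R) -> set 'I_L) (eps : R) : Prop :=
  forall v w, simplex v -> simplex w ->
    enorm (fun i => v i - w i) < eps -> s v `&` s w <> set0.

End Defs.

From HB Require Import structures.
From mathcomp Require Import all_boot all_order all_algebra.
From mathcomp Require Import boolp classical_sets reals.
From mathcomp Require Import lra.
Set Implicit Arguments. Unset Strict Implicit. Unset Printing Implicit Defensive.
Import Order.TTheory GRing.Theory Num.Theory.
Local Open Scope ring_scope.
Local Open Scope classical_set_scope.

(* Write c = eps/sqrt 2 and overshoot x t = sum_l max(x_l - t, 0)^2, the squared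
   distance from x to the orthant {u | u <= t}.  Raising coordinate j of the
   projection of x onto that orthant to t + c lands in R_j^eps, so j is in
   argmax^eps(x) as soon as x_j exceeds the threshold
     theta(x) = inf { t + c - sqrt(eps^2 - overshoot x t) | overshoot x t < eps^2 }.
   Conversely the infimum forces overshoot x t >= eps^2 - (t + c - theta(x))^2.
   If theta(w) <= theta(v) and no coordinate exceeds both thresholds, these
   lower bounds for overshoot v theta(v) and overshoot w theta(v) add up, after
   expanding |v - w|^2 coordinatewise, to |v - w|^2 >= eps^2. *)

Lemma sum_sqr_le_sqr_sum (R : numDomainType) (I : finType) (a : I -> R) :
  (forall i, 0 <= a i) -> \sum_i a i ^+ 2 <= (\sum_i a i) ^+ 2.
Proof.
move=> a_ge0; rewrite [X in _ <= X]expr2 mulr_suml.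
apply: ler_sum => i _; rewrite expr2 ler_wpM2l //.
by rewrite (bigD1 i) //= lerDl sumr_ge0.
Qed.

Lemma sqrtr_lt (R : rcfType) (a e : R) : 0 < e -> (Num.sqrt a < e) = (a < e ^+ 2).
Proof.
by move=> e_gt0; rewrite -[e in LHS]gtr0_norm // -sqrtr_sqr ltr_sqrt ?exprn_gt0.
Qed.

Section Overshoot.
Variables (R : realType) (L : nat).
Implicit Types (v w x : 'I_L -> R) (t : R).

Lemma dist_le_enorm x (A : set ('I_L -> R)) u :
  A u -> dist x A <= enorm (fun i => x i - u i).
Proof.
move=> Au; apply: ge_inf; last by exists u.
by exists 0 => _ [y _ <-]; apply: sqrtr_ge0.
Qed.

Definition overshoot x t : R := \sum_(l < L) Num.max (x l - t) 0 ^+ 2.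

Lemma overshoot_ge0 x t : 0 <= overshoot x t.
Proof. by apply: sumr_ge0 => l _; apply: sqr_ge0. Qed.

Lemma overshoot_ge_term x t l : Num.max (x l - t) 0 ^+ 2 <= overshoot x t.
Proof. by rewrite /overshoot (bigD1 l) //= lerDl sumr_ge0 // => i _; apply: sqr_ge0. Qed.

Lemma overshoot_sum_norm x : overshoot x (\sum_(l < L) `|x l|) = 0.
Proof.
rewrite /overshoot big1 // => l _; rewrite max_r ?expr0n // subr_le0.
rewrite (bigD1 l) //= (le_trans (ler_norm _)) // lerDl.
by apply: sumr_ge0.
Qed.

Lemma sqr_dist_raise_proj x t s j :
  \sum_(l < L) (x l - (if l == j then s else Num.min (x l) t)) ^+ 2 =
  (x j - s) ^+ 2 + (overshoot x t - Num.max (x j - t) 0 ^+ 2).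
Proof.
rewrite (bigD1 j) //= eqxx /overshoot [in RHS](bigD1 j) //= addrAC subrr add0r.
congr (_ + _); apply: eq_bigr => l /negPf ->; congr (_ ^+ 2).
by case: (leP (x l) t) => xt; [rewrite max_r ?subrr // subr_le0 |
  rewrite max_l // subr_ge0 ltW].
Qed.

Lemma sqr_sub_ge_overshoot_sum v w T k (l0 : 'I_L) :
  0 <= k -> (forall l, T < v l -> w l <= T - k) -> T < v l0 ->
  overshoot v T + 2 * k * \sum_(l < L) Num.max (v l - T) 0 + overshoot w T + k ^+ 2
    <= \sum_(l < L) (v l - w l) ^+ 2.
Proof.
move=> k_ge0 vw_sep vl0.
pose g l := Num.max (v l - T) 0 ^+ 2 + 2 * k * Num.max (v l - T) 0
  + Num.max (w l - T) 0 ^+ 2.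
have g_sum : \sum_(l < L) g l =
    overshoot v T + 2 * k * \sum_(l < L) Num.max (v l - T) 0 + overshoot w T.
  by rewrite /g !big_split /= -big_distrr.
have g_above l : T < v l -> g l + k ^+ 2 <= (v l - w l) ^+ 2.
  move=> vl; have wl := vw_sep l vl.
  rewrite /g (max_l (_ : 0 <= v l - T)) ?(max_r (_ : w l - T <= 0)); try lra.
  rewrite expr0n /= addr0; nra.
have g_le l : g l <= (v l - w l) ^+ 2.
  case: (leP (v l) T) => vl; last by have := g_above l vl; have := sqr_ge0 k; lra.
  rewrite /g max_r ?subr_le0 // expr0n /= mulr0 !add0r.
  by case: (leP (w l) T) => wl; [rewrite max_r ?subr_le0 ?expr0n ?sqr_ge0 |
    rewrite max_l; [nra | lra]].
rewrite -g_sum (bigD1 l0) //= [leRHS](bigD1 l0) //= addrAC.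
by apply: lerD; [apply: g_above | apply: ler_sum => l _; apply: g_le].
Qed.

End Overshoot.

Section Threshold.
Variables (R : realType) (L : nat) (eps : R).
Hypothesis eps_gt0 : 0 < eps.
Implicit Types (v w x : 'I_L -> R) (t : R).

Let c : R := eps / Num.sqrt 2.

Let c_gt0 : 0 < c.
Proof. by rewrite divr_gt0 // sqrtr_gt0 ltr0n. Qed.

Let eps_sqr : eps ^+ 2 = 2 * c ^+ 2.
Proof. by rewrite expr_div_n sqr_sqrtr ?ler0n // mulrC divfK ?pnatr_eq0. Qed.

Definition thresholds x : set R :=
  [set t + c - Num.sqrt (eps ^+ 2 - overshoot x t) | t in [set t | overshoot x t < eps ^+ 2]].

Definition threshold x : R := inf (thresholds x).

Let sqr_sqrt_slack x t : overshoot x t < eps ^+ 2 ->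
  Num.sqrt (eps ^+ 2 - overshoot x t) ^+ 2 = eps ^+ 2 - overshoot x t.
Proof. by move=> lt_eps; rewrite sqr_sqrtr // subr_ge0 ltW. Qed.

Lemma thresholds_neq0 x : thresholds x !=set0.
Proof.
exists (\sum_l `|x l| + c - Num.sqrt (eps ^+ 2 - overshoot x (\sum_l `|x l|))).
by exists (\sum_l `|x l|) => //=; rewrite overshoot_sum_norm exprn_gt0.
Qed.

Lemma thresholds_lbound (i0 : 'I_L) x : has_lbound (thresholds x).
Proof.
exists (x i0 - 2 * eps) => _ [t /= lt_eps <-].
have t_gt : x i0 - eps < t.
  have := le_lt_trans (overshoot_ge_term x t i0) lt_eps.
  rewrite ltr_pXn2r ?nnegrE ?le_max ?lexx ?orbT ?ltW // gt_max; lra.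
have : Num.sqrt (eps ^+ 2 - overshoot x t) <= eps.
  rewrite -[leRHS]gtr0_norm // -sqrtr_sqr ler_sqrt ?sqr_ge0 //.
  by have := overshoot_ge0 x t; lra.
by have := c_gt0; lra.
Qed.

Lemma argmax_eps_threshold x j : threshold x < x j -> argmax_eps eps x j.
Proof.
case/(inf_lt (thresholds_neq0 x)) => _ [t /= lt_eps <-] lt_xj.
pose u l := if l == j then t + c else Num.min (x l) t.
have u_reg : Rreg eps j u.
  move=> l /negPf lj; rewrite /u lj eqxx -/c lerD2r.
  by rewrite ge_min lexx orbT.
apply: le_lt_trans (dist_le_enorm x u_reg) _; rewrite /enorm sqrtr_lt //.
rewrite sqr_dist_raise_proj.
have q_ge0 := sqrtr_ge0 (eps ^+ 2 - overshoot x t).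
have q_sqr := sqr_sqrt_slack lt_eps.
move: lt_xj q_ge0 q_sqr; set q := Num.sqrt _ => lt_xj q_ge0 q_sqr.
have := c_gt0; have := eps_sqr.
case: (leP (x j) t) => xjt.
  rewrite max_r ?subr_le0 // expr0n /= subr0; nra.
rewrite (max_l (_ : 0 <= x j - t)); last lra.
have : 0 < c * (x j - t - c + q) by rewrite mulr_gt0 //; lra.
have := sqr_ge0 (q - c); nra.
Qed.

Lemma overshoot_ge_threshold (i0 : 'I_L) x t : threshold x <= t + c ->
  eps ^+ 2 - (t + c - threshold x) ^+ 2 <= overshoot x t.
Proof.
move=> le_theta; case: (leP (eps ^+ 2) (overshoot x t)) => [|lt_eps].
  by have := sqr_ge0 (t + c - threshold x); lra.
have := ge_inf (thresholds_lbound i0 x) (ex_intro2 _ _ t lt_eps erefl).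
rewrite -/(threshold x).
have := sqr_sqrt_slack lt_eps; have := sqrtr_ge0 (eps ^+ 2 - overshoot x t).
set q := Num.sqrt _ => q_ge0 q_sqr le_q; nra.
Qed.

Lemma threshold_common_index (i0 : 'I_L) v w :
  \sum_(l < L) (v l - w l) ^+ 2 < eps ^+ 2 ->
  exists j, threshold v < v j /\ threshold w < w j.
Proof.
move=> lt_eps; wlog le_vw : v w lt_eps / threshold w <= threshold v => [hwlog|].
  case: (leP (threshold w) (threshold v)) => [|/ltW le_wv]; first exact: hwlog.
  have [|j [? ?]] := hwlog w v _ le_wv; last by exists j.
  by under eq_bigr => l _ do rewrite -sqrrN opprB.
apply: contrapT => no_common.
set T := threshold v; set k := T - threshold w.
pose a l := Num.max (v l - T) 0.
have c_pos := c_gt0; have c_sqr := eps_sqr.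
have over_v : c ^+ 2 <= overshoot v T.
  have := @overshoot_ge_threshold i0 v T; rewrite addrAC subrr add0r lerDl.
  by move=> /(_ (ltW c_pos)); lra.
have over_w : eps ^+ 2 - (k + c) ^+ 2 <= overshoot w T.
  have := @overshoot_ge_threshold i0 w T.
  have -> : T + c - threshold w = k + c by rewrite /k; lra.
  by apply; rewrite /k; lra.
have sum_a : c <= \sum_l a l.
  have a_ge0 l : 0 <= a l by rewrite le_max lexx orbT.
  have : 0 <= \sum_l a l by apply: sumr_ge0 => l _; apply: a_ge0.
  have := sum_sqr_le_sqr_sum a_ge0; rewrite -/(overshoot v T); nra.
have [l0 vl0] : exists l0, T < v l0.
  apply: contrapT => no_l0; suff : \sum_l a l = 0 by lra.
  apply: big1 => l _; rewrite /a max_r // subr_le0 leNgt; apply/negP => vl.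
  by apply: no_l0; exists l.
have sep l : T < v l -> w l <= T - k.
  move=> vl; rewrite /k opprB addrC subrK leNgt; apply/negP => wl.
  by apply: no_common; exists l.
have k_ge0 : 0 <= k by rewrite subr_ge0.
have := sqr_sub_ge_overshoot_sum k_ge0 sep vl0.
have := mulr_ge0 k_ge0 (ltW c_pos); nra.
Qed.

End Threshold.

Theorem theorem3 (R : realType) (L : nat) (hL : (0 < L)%N) (eps : R) (heps : 0 < eps) :
  (forall v w : 'I_L -> R, enorm (fun i => v i - w i) < eps ->
     argmax_eps eps v `&` argmax_eps eps w <> set0) /\
  eps_compatible (@argmax_eps R L eps) eps.
Proof.
have common (v w : 'I_L -> R) : enorm (fun i => v i - w i) < eps ->
    argmax_eps eps v `&` argmax_eps eps w <> set0.
  rewrite /enorm sqrtr_lt // => lt_eps.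
  have [j [vj wj]] := threshold_common_index heps (Ordinal hL) lt_eps.
  move=> /seteqP [/(_ j) + _]; apply.
  by split; apply: argmax_eps_threshold.
by split=> // v w _ _; apply: common.
Qed.
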